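(* Let $F : L_n \to \Delta K$ be a non-degenerate $2$-filtration, fix a dimension $q$, and fix grades $d,h\in L_n$ with $(1,1)\le d$ and $d\le h-(1,1)$. Set $a=d-(1,1)$, $b=d-(1,0)$, $c=d-(0,1)$, $e=h-(1,1)$, $f=h-(1,0)$, $g=h-(0,1)$. If $adeh=1$, then \[\mathsf{Dgm}_q F[d,h]=B\cdot D,\qquad B=1-abeh-aceh,\quad D=1-adef-adeg.\]
   Context: $K$ is a finite simplicial complex, coefficients in a field. $P_n=\{0<\dots<n\}$, $L_n=P_n\times P_n$ with product order, $\bot=(0,0)$, $\top=(n,n)$. $\mathsf{Int}\,L_n=\{[x,y]:x\le y\}$ with $[x,y]\le[z,w]$ iff $x\le z$, $y\le w$. A $2$-filtration is a monotone map $F$ from $L_n$ to subcomplexes of $K$ (ordered by inclusion) with $F(\bot)=\emptyset$, $F(\top)=K$. Birth–death function: $ZB_qF[x,y]=\dim(Z_qF(x)\cap B_qF(y))$ for $y\ne\top$ and $\dim Z_qF(x)$ for $y=\top$, where $Z_q,B_q$ denote $q$-cycles and $q$-boundaries. $\mathsf{Dgm}_qF$ is the unique function on $\mathsf{Int}\,L_n$ with $ZB_qF[z,w]=\sum_{[x,y]\le[z,w]}\mathsf{Dgm}_qF[x,y]$. For a simplex $\sigma$, the minimal elements of the upset $\{x:\sigma\in F(x)\}$ are its lower corners; $F$ is non-degenerate if any two distinct lower corners differ in both coordinates. Notation: for $x\le y$, $xy:=ZB_qF[x,y]$; for $w\le x\le y\le z$, $wxyz:=xz-xy-wz+wy$ (the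 1-parameter Möbius inversion value of the interval $[x,z]$ in the filtration $F(w)\subseteq F(x)\subseteq F(y)\subseteq F(z)$). *)

From HB Require Import structures.
From mathcomp Require Import all_boot all_order all_algebra.
From Stdlib Require Import ClassicalEpsilon.
Set Implicit Arguments. Unset Strict Implicit. Unset Printing Implicit Defensive.
Import Order.TTheory GRing.Theory Num.Theory.
Local Open Scope ring_scope.

Definition is_complex (V : finType) (X : {set {set V}}) : Prop :=
  forall s, s \in X -> s != set0 /\ (forall t : {set V}, t \subset s -> t != set0 -> t \in X).

Definition simplices (V : finType) (q : nat) (X : {set {set V}}) : {set {set V}} :=
  [set s in X | #|s| == q.+1].

(* Chains with coefficients in the field k: functions on all vertex sets;
   a chain "lives on" X when supported on simplices of X. *)
Definition chain (k : fieldType) (V : finType) := {ffun {set V} -> k^o}.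

Definition elem_chain (k : fieldType) (V : finType) (s : {set V}) : chain k V :=
  [ffun t => (t == s)%:R].

(* vertices are ordered by enum_rank; sign of removing v from s *)
Definition rm_sign (k : fieldType) (V : finType) (s : {set V}) (v : V) : k :=
  (-1) ^+ #|[set u in s | enum_rank u < enum_rank v]%N|.

(* boundary of an oriented simplex (non-augmented: faces must be nonempty) *)
Definition bd_simplex (k : fieldType) (V : finType) (s : {set V}) : chain k V :=
  \sum_(v in s | s :\ v != set0) (rm_sign k s v : k^o) *: elem_chain k (s :\ v).

Definition bd_fun (k : fieldType) (V : finType) (c : chain k V) : chain k V :=
  \sum_(s : {set V}) c s *: bd_simplex k s.

Definition bd (k : fieldType) (V : finType) : 'End(chain k V) := linfun (@bd_fun k V).

Definition chains_on (k : fieldType) (V : finType) (S : {set {set V}}) : {vspace chain k V} :=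
  <<[seq elem_chain k s | s <- enum S]>>%VS.

Definition Zq (k : fieldType) (V : finType) (q : nat) (X : {set {set V}}) : {vspace chain k V} :=
  (chains_on k (simplices q X) :&: lker (bd k V))%VS.

Definition Bq (k : fieldType) (V : finType) (q : nat) (X : {set {set V}}) : {vspace chain k V} :=
  <<[seq bd_simplex k s | s <- enum (simplices q.+1 X)]>>%VS.

Definition grade := (nat * nat)%type.
Definition inL (n : nat) (x : grade) : bool := (x.1 <= n)%N && (x.2 <= n)%N.
Definition gle (x y : grade) : bool := (x.1 <= y.1)%N && (x.2 <= y.2)%N.

Definition is_2filtration (V : finType) (n : nat) (K : {set {set V}})
    (F : grade -> {set {set V}}) : Prop :=
  is_complex K /\
  (forall x, inL n x -> is_complex (F x) /\ F x \subset K) /\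
  (forall x y, inL n x -> inL n y -> gle x y -> F x \subset F y) /\
  F (0, 0)%N = set0 /\ F (n, n) = K.

Definition lower_corner (V : finType) (n : nat) (F : grade -> {set {set V}})
    (s : {set V}) (x : grade) : Prop :=
  inL n x /\ s \in F x /\
  (forall y, inL n y -> gle y x -> s \in F y -> y = x).

Definition non_degenerate (V : finType) (n : nat) (F : grade -> {set {set V}}) : Prop :=
  forall s x y, lower_corner n F s x -> lower_corner n F s y -> x <> y ->
    x.1 <> y.1 /\ x.2 <> y.2.

Definition ZB (k : fieldType) (V : finType) (n q : nat) (F : grade -> {set {set V}})
    (x y : grade) : nat :=
  if y == (n, n) then \dim (Zq k q (F x))
  else \dim (Zq k q (F x) :&: Bq k q (F y))%VS.

Definition sum_below (n : nat) (D : grade -> grade -> int) (z w : grade) : int :=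
  \sum_(x1 < n.+1) \sum_(x2 < n.+1) \sum_(y1 < n.+1) \sum_(y2 < n.+1)
     (if gle (x1 : nat, x2 : nat) (y1 : nat, y2 : nat)
         && gle (x1 : nat, x2 : nat) z && gle (y1 : nat, y2 : nat) w
      then D (x1 : nat, x2 : nat) (y1 : nat, y2 : nat) else 0).

Definition is_Dgm (k : fieldType) (V : finType) (n q : nat) (F : grade -> {set {set V}})
    (D : grade -> grade -> int) : Prop :=
  forall z w, inL n z -> inL n w -> gle z w ->
    (ZB k n q F z w)%:Z = sum_below n D z w.

(* Dgm_q F : the (unique) function satisfying the Moebius-inversion identity *)
Definition Dgm (k : fieldType) (V : finType) (n q : nat) (F : grade -> {set {set V}}) :
    grade -> grade -> int :=
  epsilon (inhabits (fun _ _ => 0)) (is_Dgm k n q F).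

(* wxyz := xz - xy - wz + wy  with  xy := ZB_q F [x,y] *)
Definition quad (k : fieldType) (V : finType) (n q : nat) (F : grade -> {set {set V}})
    (w x y z : grade) : int :=
  (ZB k n q F x z)%:Z - (ZB k n q F x y)%:Z - (ZB k n q F w z)%:Z + (ZB k n q F w y)%:Z.

(* Möbius inversion on the grid turns Dgm_q F [d, h] into the alternating sum
   of the sixteen values xy with x in {a, b, c, d} and y in {e, f, g, h}.
   Put U = Z(d) ∩ B(h), X_x = Z(x) ∩ B(h), Y_y = Z(d) ∩ B(y) and H = X_a + Y_e.
   For a <= x <= d and e <= y <= h we have Z(x) ∩ B(y) = X_x ∩ Y_y, hence
   xy = dim X_x + dim Y_y - dim (X_x + Y_y), and adeh = dim U - dim H, so the
   hypothesis adeh = 1 says that H is a hyperplane of U.  Then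
   dim (X_x + Y_y) = dim H + 1 - [X_x <= H] [Y_y <= H]: in the alternating sum
   every term depending on x alone or on y alone cancels, and what remains is
   the product of the alternating sums of [X_x <= H] and of [Y_y <= H], which
   are the two factors of the claimed product. *)

From HB Require Import structures.
From mathcomp Require Import all_boot all_order all_algebra.
From mathcomp Require Import zify ring.
From Stdlib Require Import ClassicalEpsilon.
Set Implicit Arguments. Unset Strict Implicit. Unset Printing Implicit Defensive.
Import GRing.Theory Num.Theory.
Local Open Scope ring_scope.

Definition diffn (g : nat -> int) (i : nat) : int :=
  if i is j.+1 then g i - g j else g i.

Definition psum (t : nat -> int) (w : nat) : int := \sum_(i < w.+1) t i.

Lemma eq_diffn (g g' : nat -> int) i :
  (forall j, (i.-1 <= j <= i)%N -> g j = g' j) -> diffn g i = diffn g' i.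
Proof. by case: i => [|i] E /=; rewrite !E ?leqnn ?leqnSn. Qed.

Lemma eq_psum (t t' : nat -> int) w : t =1 t' -> psum t w = psum t' w.
Proof. by move=> E; apply: eq_bigr => i _; rewrite E. Qed.

Lemma diffn_psum t i : diffn (psum t) i = t i.
Proof.
by case: i => [|i] /=; rewrite /psum ?big_ord1 // big_ord_recr /= addrAC subrr add0r.
Qed.

Lemma psum_diffn g w : psum (diffn g) w = g w.
Proof.
elim: w => [|w IHw]; first by rewrite /psum big_ord1.
by rewrite /psum big_ord_recr -/(psum _ _) IHw /= addrC subrK.
Qed.

Lemma psum_widen n w (A : nat -> int) : (w <= n)%N ->
  \sum_(i < n.+1) (if (i <= w)%N then A i else 0) = psum A w.
Proof. by move=> le_wn; rewrite /psum (big_ord_widen n.+1 A) // [RHS]big_mkcond. Qed.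

Lemma diffn_eq0 g i : (forall j, (i.-1 <= j <= i)%N -> g j = 0) -> diffn g i = 0.
Proof. by move/eq_diffn->; case: i => //= i; rewrite subrr. Qed.

Lemma diffn_stable g i : (0 < i)%N -> g i = g i.-1 -> diffn g i = 0.
Proof. by case: i => //= i _ ->; rewrite subrr. Qed.

Definition diff4 (G : nat -> nat -> nat -> nat -> int) (x1 x2 y1 y2 : nat) : int :=
  diffn (fun y2 => diffn (fun y1 => diffn (fun x2 =>
    diffn (fun x1 => G x1 x2 y1 y2) x1) x2) y1) y2.

Definition psum4 (T : nat -> nat -> nat -> nat -> int) (z1 z2 w1 w2 : nat) : int :=
  psum (fun x1 => psum (fun x2 => psum (fun y1 =>
    psum (fun y2 => T x1 x2 y1 y2) w2) w1) z2) z1.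

Lemma eq_diff4 (G G' : nat -> nat -> nat -> nat -> int) x1 x2 y1 y2 :
  (forall z1 z2 w1 w2, (x1.-1 <= z1 <= x1)%N -> (x2.-1 <= z2 <= x2)%N ->
     (y1.-1 <= w1 <= y1)%N -> (y2.-1 <= w2 <= y2)%N -> G z1 z2 w1 w2 = G' z1 z2 w1 w2) ->
  diff4 G x1 x2 y1 y2 = diff4 G' x1 x2 y1 y2.
Proof.
move=> E; apply: eq_diffn => w2 ?; apply: eq_diffn => w1 ?.
by apply: eq_diffn => z2 ?; apply: eq_diffn => z1 ?; apply: E.
Qed.

Lemma diff4_psum4 T x1 x2 y1 y2 : diff4 (psum4 T) x1 x2 y1 y2 = T x1 x2 y1 y2.
Proof.
rewrite /diff4 /psum4.
under eq_diffn => w2 _ do under eq_diffn => w1 _ do under eq_diffn => z2 _ do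
  rewrite diffn_psum.
under eq_diffn => w2 _ do under eq_diffn => w1 _ do rewrite diffn_psum.
under eq_diffn => w2 _ do rewrite diffn_psum.
by rewrite diffn_psum.
Qed.

Lemma psum4_diff4 G z1 z2 w1 w2 : psum4 (diff4 G) z1 z2 w1 w2 = G z1 z2 w1 w2.
Proof.
rewrite /psum4 /diff4.
under eq_psum => x1 do under eq_psum => x2 do under eq_psum => y1 do
  rewrite psum_diffn.
under eq_psum => x1 do under eq_psum => x2 do rewrite psum_diffn.
under eq_psum => x1 do rewrite psum_diffn.
by rewrite psum_diffn.
Qed.

Lemma diff4_eq0 G x1 x2 y1 y2 :
  (forall z1 z2 w1 w2, G z1 z2 w1 w2 = G (minn z1 w1) (minn z2 w2) w1 w2) ->
  ~~ gle (x1, x2) (y1, y2) -> diff4 G x1 x2 y1 y2 = 0.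
Proof.
rewrite /gle negb_and -!ltnNge /= => G_min /orP[lt_y1x1 | lt_y2x2].
- apply: diffn_eq0 => w2 _; apply: diffn_eq0 => w1 /andP[_ le_w1y1].
  apply: diffn_eq0 => z2 _; apply: diffn_stable; first by lia.
  by rewrite G_min [RHS]G_min; congr G; lia.
- apply: diffn_eq0 => w2 /andP[_ le_w2y2]; apply: diffn_eq0 => w1 _.
  apply: diffn_stable; first by lia.
  by apply: eq_diffn => z1 _; rewrite G_min [RHS]G_min; congr G; lia.
Qed.

Lemma sum_below_psum4 n D z w : inL n z -> inL n w ->
  sum_below n D z w = psum4 (fun x1 x2 y1 y2 =>
    if gle (x1, x2) (y1, y2) then D (x1, x2) (y1, y2) else 0) z.1 z.2 w.1 w.2.
Proof.
case: z w => [z1 z2] [w1 w2] /andP[/= z1n z2n] /andP[/= w1n w2n].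
rewrite /sum_below /psum4 -(psum_widen _ z1n); apply: eq_bigr => x1 _.
case: ifP => x1z1; last by do 3!(apply: big1 => ? _); rewrite /gle /= x1z1 andbF.
rewrite -(psum_widen _ z2n); apply: eq_bigr => x2 _.
case: ifP => x2z2; last by do 2!(apply: big1 => ? _); rewrite /gle /= x2z2 !andbF.
rewrite -(psum_widen _ w1n); apply: eq_bigr => y1 _.
case: ifP => y1w1; last by apply: big1 => ? _; rewrite /gle /= y1w1 !andbF.
rewrite -(psum_widen _ w2n); apply: eq_bigr => y2 _.
by rewrite /gle /= x1z1 x2z2 y1w1; case: (y2 <= w2)%N; rewrite ?andbT ?andbF.
Qed.

Lemma sum_below_surj n (Zf : grade -> grade -> int) :
  exists D, forall z w, inL n z -> inL n w -> gle z w -> Zf z w = sum_below n D z w.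
Proof.
(* Clamping z below w makes diff4 G vanish off [x <= y] (diff4_eq0), so the
   restriction to comparable pairs in sum_below does not matter. *)
pose G z1 z2 w1 w2 := Zf (minn z1 w1, minn z2 w2) (w1, w2).
have G_min z1 z2 w1 w2 : G z1 z2 w1 w2 = G (minn z1 w1) (minn z2 w2) w1 w2.
  by rewrite /G -!minnA !minnn.
exists (fun x y => diff4 G x.1 x.2 y.1 y.2) => -[z1 z2] [w1 w2] zn wn /andP[/= zw1 zw2].
have -> : Zf (z1, z2) (w1, w2) = G z1 z2 w1 w2.
  by rewrite /G (minn_idPl zw1) (minn_idPl zw2).
rewrite sum_below_psum4 // -[LHS]psum4_diff4 /psum4.
apply: eq_psum => x1; apply: eq_psum => x2; apply: eq_psum => y1; apply: eq_psum => y2.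
by case: ifP => // /negbT /(diff4_eq0 G_min).
Qed.

Lemma sum_below_diff4 n (Zf : grade -> grade -> int) D d h :
  (forall z w, inL n z -> inL n w -> gle z w -> Zf z w = sum_below n D z w) ->
  inL n h -> gle d (h.1.-1, h.2.-1) ->
  D d h = diff4 (fun z1 z2 w1 w2 => Zf (z1, z2) (w1, w2)) d.1 d.2 h.1 h.2.
Proof.
case: d h => [d1 d2] [h1 h2] ZfD /andP[/= h1n h2n] /andP[/= dh1 dh2] /=.
rewrite (eq_diff4 (G' := psum4 (fun x1 x2 y1 y2 =>
           if gle (x1, x2) (y1, y2) then D (x1, x2) (y1, y2) else 0))).
  by rewrite diff4_psum4 /gle /= ifT //; apply/andP; split; lia.
move=> z1 z2 w1 w2 /andP[? ?] /andP[? ?] /andP[? ?] /andP[? ?].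
rewrite ZfD ?sum_below_psum4 // /inL /gle /=; lia.
Qed.

Definition rect (I J : Type) (R : zmodType) (N : I -> J -> R) (w x : I) (y z : J) : R :=
  N x z - N x y - N w z + N w y.

Definition square_diff (I : Type) (R : zmodType) (phi : I -> R) (a b c d : I) : R :=
  phi d - phi b - phi c + phi a.

Section SubspaceDimension.
Variables (K : fieldType) (vT : vectType K).
Implicit Types U X Y : {vspace vT}.

Lemma capv_widen X X' Y Y' :
  (X <= X')%VS -> (Y <= Y')%VS -> (X :&: Y' :&: (X' :&: Y) = X :&: Y)%VS.
Proof.
move=> sXX' sYY'; apply/vspaceP => v; rewrite !memv_cap.
apply/idP/idP => [/andP[/andP[-> _] /andP[_ ->]] // | /andP[vX vY]].
by rewrite vX vY (subvP sXX' _ vX) (subvP sYY' _ vY).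
Qed.

Lemma dimv_add_hyperplane X0 X Y0 Y U :
  (X0 <= X)%VS -> (X <= U)%VS -> (Y0 <= Y)%VS -> (Y <= U)%VS ->
  \dim U = (\dim (X0 + Y0)).+1 ->
  \dim (X + Y) = (\dim (X0 + Y0) + ~~ (X + Y <= X0 + Y0)%VS)%N.
Proof.
move=> sX0X sXU sY0Y sYU dimU.
have sHXY := addvS sX0X sY0Y.
have /dimvS : (X + Y <= U)%VS by rewrite subv_add sXU sYU.
case: (boolP (X + Y <= X0 + Y0)%VS) => [sXYH _ | nsXYH].
  by rewrite addn0; apply/eqP; rewrite eqn_leq !dimvS.
have : (\dim (X0 + Y0) < \dim (X + Y))%N.
  by rewrite (ltn_leqif (dimv_leqif_eq sHXY)) eqEsubv sHXY.
rewrite dimU addn1; lia.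
Qed.

End SubspaceDimension.

Section BirthDeathSquare.
Variables (K : fieldType) (vT : vectType K) (I J : Type).
Variables (Z : I -> {vspace vT}) (B : J -> {vspace vT}) (N : I -> J -> int).
Hypothesis N_dim : forall x y, N x y = (\dim (Z x :&: B y))%:Z.
Variables (a b c d : I) (e f g h : J).
Hypotheses (Zab : (Z a <= Z b)%VS) (Zac : (Z a <= Z c)%VS).
Hypotheses (Zbd : (Z b <= Z d)%VS) (Zcd : (Z c <= Z d)%VS).
Hypotheses (Bef : (B e <= B f)%VS) (Beg : (B e <= B g)%VS).
Hypotheses (Bfh : (B f <= B h)%VS) (Bgh : (B g <= B h)%VS).

Local Notation X x := (Z x :&: B h)%VS.
Local Notation Y y := (Z d :&: B y)%VS.
Local Notation H := (X a + Y e)%VS.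
Let Zad := subv_trans Zab Zbd.
Let Beh := subv_trans Bef Bfh.

Let N_XY x y : (Z x <= Z d)%VS -> (B y <= B h)%VS -> N x y = (\dim (X x :&: Y y))%:Z.
Proof. by move=> Zxd Byh; rewrite N_dim capv_widen. Qed.

Let rect_codim : rect N a d e h = (\dim (Z d :&: B h))%:Z - (\dim H)%:Z.
Proof.
rewrite /rect (N_XY Zad Beh) !N_dim.
by have := dimv_sum_cap (X a) (Y e); clear; lia.
Qed.

Let N_split (codim1 : \dim (Z d :&: B h) = (\dim H).+1) x y :
  (Z a <= Z x)%VS -> (Z x <= Z d)%VS -> (B e <= B y)%VS -> (B y <= B h)%VS ->
  N x y = (\dim (X x))%:Z + (\dim (Y y))%:Z - (\dim H)%:Z - 1
          + ((X x <= H)%VS)%:Z * ((Y y <= H)%VS)%:Z.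
Proof.
move=> Zax Zxd Bey Byh; rewrite N_XY //.
have := dimv_add_hyperplane (capvS Zax (subvv (B h))) (capvS Zxd (subvv (B h)))
  (capvS (subvv (Z d)) Bey) (capvS (subvv (Z d)) Byh) codim1.
have := dimv_sum_cap (X x) (Y y).
rewrite subv_add => + hyper; rewrite hyper; clear.
by case: (X x <= H)%VS; case: (Y y <= H)%VS => /=; lia.
Qed.

Lemma square_diff_rect : rect N a d e h = 1 ->
  square_diff (fun x => square_diff (N x) e f g h) a b c d =
  (1 - rect N a b e h - rect N a c e h) * (1 - rect N a d e f - rect N a d e g).
Proof.
move=> adeh.
have codim1 : \dim (Z d :&: B h) = (\dim H).+1.
  by move: adeh; rewrite rect_codim; clear; lia.
have Xa : (X a <= H)%VS := addvSl _ _.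
have Ye : (Y e <= H)%VS := addvSr _ _.
have Ud : (Z d :&: B h <= H)%VS = false by apply/negP => /dimvS; rewrite codim1 ltnn.
by rewrite /square_diff /rect !(N_split codim1) // Xa Ye Ud /=; ring.
Qed.

End BirthDeathSquare.

Lemma diff4S G x1 x2 y1 y2 :
  diff4 G x1.+1 x2.+1 y1.+1 y2.+1 =
  square_diff (fun x => square_diff (fun y => G x.1 x.2 y.1 y.2)
      (y1, y2) (y1, y2.+1) (y1.+1, y2) (y1.+1, y2.+1))
    (x1, x2) (x1, x2.+1) (x1.+1, x2) (x1.+1, x2.+1).
Proof. by rewrite /diff4 /square_diff /=; ring. Qed.

Lemma simplices_mono (V : finType) q (X Y : {set {set V}}) :
  X \subset Y -> simplices q X \subset simplices q Y.
Proof. by move=> sXY; apply/subsetP => s; rewrite !inE => /andP[/(subsetP sXY) -> ->]. Qed.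

Lemma chains_on_mono (k : fieldType) (V : finType) (S S' : {set {set V}}) :
  S \subset S' -> (chains_on k S <= chains_on k S')%VS.
Proof.
move=> sS; apply: sub_span => v /mapP[s]; rewrite mem_enum => Ss ->.
by apply: map_f; rewrite mem_enum (subsetP sS).
Qed.

Lemma Zq_mono (k : fieldType) (V : finType) q (X Y : {set {set V}}) :
  X \subset Y -> (Zq k q X <= Zq k q Y)%VS.
Proof. by move=> sXY; apply: capvS (subvv _); apply/chains_on_mono/simplices_mono. Qed.

Lemma Bq_mono (k : fieldType) (V : finType) q (X Y : {set {set V}}) :
  X \subset Y -> (Bq k q X <= Bq k q Y)%VS.
Proof.
move=> sXY; apply: sub_span => v /mapP[s]; rewrite mem_enum => Ss ->.
by apply: map_f; rewrite mem_enum (subsetP (simplices_mono _ sXY)).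
Qed.

(* At the top grade ZB counts all cycles, i.e. the whole chain space stands in for B_q. *)
Definition Bq_top (k : fieldType) (V : finType) (n q : nat) (F : grade -> {set {set V}})
    (y : grade) : {vspace chain k V} :=
  if y == (n, n) then fullv else Bq k q (F y).

Lemma ZB_dim (k : fieldType) (V : finType) n q (F : grade -> {set {set V}}) x y :
  ZB k n q F x y = \dim (Zq k q (F x) :&: Bq_top k n q F y).
Proof. by rewrite /ZB /Bq_top; case: ifP; rewrite ?capvf. Qed.

Lemma Bq_top_mono (k : fieldType) (V : finType) n q K (F : grade -> {set {set V}}) y y' :
  is_2filtration n K F -> inL n y -> inL n y' -> gle y y' ->
  (Bq_top k n q F y <= Bq_top k n q F y')%VS.
Proof.
move=> [_ [_ [Fmono _]]] yn y'n yy'; rewrite /Bq_top.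
have [_ | y'_top] := eqVneq y' (n, n); first exact: subvf.
have y_top : y != (n, n).
  apply: contraNneq y'_top => y_top; move: yy' y'n; rewrite y_top.
  by case: y' => y1 y2; rewrite /gle /inL /= xpair_eqE => ? ?; apply/andP; split; lia.
by rewrite (negbTE y_top); apply/Bq_mono/Fmono.
Qed.

Lemma Dgm_diff4 (k : fieldType) (V : finType) n q (F : grade -> {set {set V}}) d h :
  inL n h -> gle d (h.1.-1, h.2.-1) ->
  Dgm k n q F d h =
    diff4 (fun z1 z2 w1 w2 => (ZB k n q F (z1, z2) (w1, w2))%:Z) d.1 d.2 h.1 h.2.
Proof.
apply: (sum_below_diff4 (Zf := fun x y => (ZB k n q F x y)%:Z)).
change (is_Dgm k n q F (Dgm k n q F)); apply: epsilon_spec.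
exact: (sum_below_surj n (fun x y => (ZB k n q F x y)%:Z)).
Qed.

Theorem mainTheorem2 (k : fieldType) (V : finType) (n q : nat)
    (K : {set {set V}}) (F : grade -> {set {set V}}) (d h : grade) :
  is_2filtration n K F -> non_degenerate n F ->
  inL n h -> gle (1, 1)%N d -> gle d (h.1 - 1, h.2 - 1)%N ->
  let a := (d.1 - 1, d.2 - 1)%N in
  let b := (d.1 - 1, d.2)%N in
  let c := (d.1, d.2 - 1)%N in
  let e := (h.1 - 1, h.2 - 1)%N in
  let f := (h.1 - 1, h.2)%N in
  let g := (h.1, h.2 - 1)%N in
  quad k n q F a d e h = 1 ->
  Dgm k n q F d h =
    (1 - quad k n q F a b e h - quad k n q F a c e h) *
    (1 - quad k n q F a d e f - quad k n q F a d e g).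
Proof.
case: d h => [d1 d2] [h1 h2] HF _ hn /andP[/= d1_gt0 d2_gt0] dh; cbv zeta.
rewrite /= !subn1 /= in dh *; rewrite Dgm_diff4 //=.
case/andP: hn dh => /= h1n h2n /andP[/= dh1 dh2].
case: d1 d1_gt0 dh1 => // d1 _; case: d2 d2_gt0 dh2 => // d2 _.
case: h1 h1n => [|h1] // h1n; case: h2 h2n => [|h2] // h2n dh2 dh1 adeh.
have [_ [_ [Fmono _]]] := HF.
have Zmono x y : inL n x -> inL n y -> gle x y -> (Zq k q (F x) <= Zq k q (F y))%VS.
  by move=> xn yn xy; apply/Zq_mono/Fmono.
rewrite diff4S; apply: (square_diff_rect (N := fun x y => (ZB k n q F x y)%:Z)
  (Z := fun x => Zq k q (F x)) (B := Bq_top k n q F) _ _ _ _ _ _ _ _ _ adeh).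
- by move=> x y; rewrite ZB_dim.
all: first [apply: Zmono | apply: (Bq_top_mono _ _ HF)]; rewrite /inL /gle /=; lia.
Qed.
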